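(* Let $L$ be a PG-lattice and $M$ a faithful multiplication PG-lattice $L$-module with $I_M$ compact. Let $N$ be a proper element of $M$ and $\delta_L$ an expansion function on $L$. Then the following are equivalent: (1) $N$ is a $\delta_L$-primary element of $M$; (2) $(N:I_M)$ is a $\delta_L$-primary element of $L$; (3) $N=qI_M$ for some $\delta_L$-primary element $q\in L$.
   Context: $L$ is a multiplicative lattice (complete lattice with commutative, associative multiplication distributing over arbitrary joins, identity $1$, least $0$), compactly generated, $1$ compact, finite products of compact elements compact. An $L$-module is a complete lattice $M$ (least $O_M$, greatest $I_M$) with product $aB\in M$ satisfying $(\bigvee a_\alpha)A=\bigvee(a_\alpha A)$, $a(\bigvee A_\alpha)=\bigvee(aA_\alpha)$, $(ab)A=a(bA)$, $1A=A$, $0A=O_M$. $(A:B)=\bigvee\{x\in L:xB\leqslant A\}$ for $A,B\in M$. $e\in L$ is principal if $a\wedge be=((a:e)\wedge b)e$ and $(ae\vee b):e=(b:e)\vee a$ for all $a,b$; $L$ is a PG-lattice if every element is a join of principal elements. $N\in M$ is principal if $(b\wedge(B:N))N=bN\wedge B$ and $b\vee(B:N)=((bN\vee B):N)$ for all $b\in L,B\in M$; $M$ is a PG-lattice module if every element is a join of principal elements. $M$ is faithful if $(O_M:I_M)=0$; a multiplication module if every element of $M$ is $aI_M$ for some $a\in L$. An expansion function on $L$ is a map $\delta_L:L\to L$ with $a\leqslant\delta_L(a)$ and $a\leqslant b\Rightarrow\delta_L(a)\leqslant\delta_L(b)$. A proper element $p<1$ of $L$ is $\delta_L$-primary if for $a,b\in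 L$, $ab\leqslant p$ implies $a\leqslant p$ or $b\leqslant\delta_L(p)$. A proper element $P<I_M$ of $M$ is $\delta_L$-primary if for all $A\in M$, $a\in L$, $aA\leqslant P$ implies $A\leqslant P$ or $a\leqslant\delta_L((P:I_M))$. *)

From Stdlib Require Import List.

Record MultLattice := {
  ml_car :> Type;
  ml_le : ml_car -> ml_car -> Prop;
  ml_sup : (ml_car -> Prop) -> ml_car;
  ml_mul : ml_car -> ml_car -> ml_car;
  ml_one : ml_car;
  ml_le_refl : forall a, ml_le a a;
  ml_le_antisym : forall a b, ml_le a b -> ml_le b a -> a = b;
  ml_le_trans : forall a b c, ml_le a b -> ml_le b c -> ml_le a c;
  ml_sup_ub : forall (S : ml_car -> Prop) a, S a -> ml_le a (ml_sup S);
  ml_sup_least : forall (S : ml_car -> Prop) b,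
      (forall a, S a -> ml_le a b) -> ml_le (ml_sup S) b;
  ml_mulC : forall a b, ml_mul a b = ml_mul b a;
  ml_mulA : forall a b c, ml_mul a (ml_mul b c) = ml_mul (ml_mul a b) c;
  ml_mul_sup : forall a (S : ml_car -> Prop),
      ml_mul a (ml_sup S) = ml_sup (fun y => exists x, S x /\ y = ml_mul a x);
  ml_mul1 : forall a, ml_mul ml_one a = a;
  ml_one_top : forall a, ml_le a ml_one
}.

Arguments ml_le {L} : rename.
Arguments ml_sup {L} : rename.
Arguments ml_mul {L} : rename.
Arguments ml_one {L} : rename.

Section LatticeDefs.
Variable L : MultLattice.

Definition ml_zero : L := ml_sup (fun _ => False).
Definition ml_lt (a b : L) : Prop := ml_le a b /\ a <> b.
Definition ml_join (a b : L) : L := ml_sup (fun x => x = a \/ x = b).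
Definition ml_meet (a b : L) : L := ml_sup (fun x => ml_le x a /\ ml_le x b).
Definition ml_colon (a b : L) : L := ml_sup (fun x => ml_le (ml_mul x b) a).

Definition ml_compact (c : L) : Prop :=
  forall S : L -> Prop, ml_le c (ml_sup S) ->
    exists l : list L, (forall x, In x l -> S x) /\ ml_le c (ml_sup (fun x => In x l)).

Definition ml_standing : Prop :=
  (forall a : L, exists S : L -> Prop, (forall c, S c -> ml_compact c) /\ a = ml_sup S)
  /\ ml_compact ml_one
  /\ (forall a b : L, ml_compact a -> ml_compact b -> ml_compact (ml_mul a b)).

Definition ml_principal (e : L) : Prop :=
  (forall a b : L, ml_meet a (ml_mul b e) = ml_mul (ml_meet (ml_colon a e) b) e)
  /\ (forall a b : L, ml_colon (ml_join (ml_mul a e) b) e = ml_join (ml_colon b e) a).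

Definition PG_lattice : Prop :=
  forall a : L, exists S : L -> Prop, (forall e, S e -> ml_principal e) /\ a = ml_sup S.

Definition expansion (d : L -> L) : Prop :=
  (forall a, ml_le a (d a)) /\ (forall a b, ml_le a b -> ml_le (d a) (d b)).

Definition delta_primary (d : L -> L) (p : L) : Prop :=
  ml_lt p ml_one /\
  forall a b : L, ml_le (ml_mul a b) p -> ml_le a p \/ ml_le b (d p).

End LatticeDefs.

Record LModule (L : MultLattice) := {
  lm_car :> Type;
  lm_le : lm_car -> lm_car -> Prop;
  lm_sup : (lm_car -> Prop) -> lm_car;
  lm_act : L -> lm_car -> lm_car;
  lm_le_refl : forall A, lm_le A A;
  lm_le_antisym : forall A B, lm_le A B -> lm_le B A -> A = B;
  lm_le_trans : forall A B C, lm_le A B -> lm_le B C -> lm_le A C;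
  lm_sup_ub : forall (S : lm_car -> Prop) A, S A -> lm_le A (lm_sup S);
  lm_sup_least : forall (S : lm_car -> Prop) B,
      (forall A, S A -> lm_le A B) -> lm_le (lm_sup S) B;
  lm_act_supl : forall (S : L -> Prop) A,
      lm_act (ml_sup S) A = lm_sup (fun Y => exists a, S a /\ Y = lm_act a A);
  lm_act_supr : forall a (S : lm_car -> Prop),
      lm_act a (lm_sup S) = lm_sup (fun Y => exists A, S A /\ Y = lm_act a A);
  lm_actA : forall a b A, lm_act (ml_mul a b) A = lm_act a (lm_act b A);
  lm_act1 : forall A, lm_act ml_one A = A;
  lm_act0 : forall A, lm_act (ml_zero L) A = lm_sup (fun _ => False)
}.

Arguments lm_le {L M} : rename.
Arguments lm_sup {L M} : rename.
Arguments lm_act {L M} : rename.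

Section ModuleDefs.
Variables (L : MultLattice) (M : LModule L).

Definition lm_bot : M := lm_sup (fun _ => False).
Definition lm_top : M := lm_sup (fun _ => True).
Definition lm_lt (A B : M) : Prop := lm_le A B /\ A <> B.
Definition lm_join (A B : M) : M := lm_sup (fun X => X = A \/ X = B).
Definition lm_meet (A B : M) : M := lm_sup (fun X => lm_le X A /\ lm_le X B).
Definition lm_colon (A B : M) : L := ml_sup (fun x => lm_le (lm_act x B) A).

Definition lm_compact (C : M) : Prop :=
  forall S : M -> Prop, lm_le C (lm_sup S) ->
    exists l : list M, (forall X, In X l -> S X) /\ lm_le C (lm_sup (fun X => In X l)).

Definition lm_principal (N : M) : Prop :=
  (forall (b : L) (B : M),
      lm_act (ml_meet L b (lm_colon B N)) N = lm_meet (lm_act b N) B)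
  /\ (forall (b : L) (B : M),
      ml_join L b (lm_colon B N) = lm_colon (lm_join (lm_act b N) B) N).

Definition PG_module : Prop :=
  forall A : M, exists S : M -> Prop, (forall N, S N -> lm_principal N) /\ A = lm_sup S.

Definition lm_faithful : Prop := lm_colon lm_bot lm_top = ml_zero L.

Definition multiplication_module : Prop :=
  forall N : M, exists a : L, N = lm_act a lm_top.

Definition lm_delta_primary (d : L -> L) (P : M) : Prop :=
  lm_lt P lm_top /\
  forall (A : M) (a : L), lm_le (lm_act a A) P ->
    lm_le A P \/ ml_le a (d (lm_colon P lm_top)).

End ModuleDefs.

(* The heart of the proof is a cancellation law: if M is a faithful
   multiplication PG-lattice module with I_M compact, then x I_M <= a I_M
   implies x <= a.  To prove it, cover I_M by finitely many principal
   elements N_1, ..., N_k and put t_i = (N_i : I_M), u_i = (O_M : N_i).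
   Principality gives 1 <= (t_1 v ... v t_k) v u_i for each i, and
   faithfulness gives u_1 ... u_k = 0, hence 1 <= t_1 v ... v t_k.  The same
   cancellation at N_i shows t_i^2 <= (a : x); and if 1 <= J v t_1 v ... v t_k
   with every t_i^2 <= J, then already 1 <= J.  Taking J = (a : x) gives x <= a. *)
From Stdlib Require Import List.

Section LatticeFacts.
Variable L : MultLattice.
Local Notation le := (@ml_le L).
Local Notation mul := (@ml_mul L).
Local Notation one := (@ml_one L).
Local Notation join := (ml_join L).
Local Notation zero := (ml_zero L).

Definition list_sup (l : list L) : L := ml_sup (fun y => In y l).
Definition list_prod (l : list L) : L := fold_right mul one l.

Lemma zero_least (a : L) : le zero a.
Proof. apply ml_sup_least; intros ? []. Qed.

Lemma join_l (a b : L) : le a (join a b).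
Proof. apply ml_sup_ub; left; reflexivity. Qed.

Lemma join_r (a b : L) : le b (join a b).
Proof. apply ml_sup_ub; right; reflexivity. Qed.

Lemma join_least (a b c : L) : le a c -> le b c -> le (join a b) c.
Proof. intros; apply ml_sup_least; intros x [-> | ->]; auto. Qed.

Lemma join_of_le (a b : L) : le a b -> join a b = b.
Proof.
  intros; apply ml_le_antisym; [apply join_least; auto using ml_le_refl | apply join_r].
Qed.

Lemma mul_join (c a b : L) : mul c (join a b) = join (mul c a) (mul c b).
Proof.
  unfold ml_join; rewrite ml_mul_sup. apply ml_le_antisym.
  - apply ml_sup_least; intros y [x [[-> | ->] ->]]; apply ml_sup_ub; auto.
  - apply ml_sup_least; intros y [-> | ->]; apply ml_sup_ub; eauto.
Qed.

Lemma mul_mono_r (c a b : L) : le a b -> le (mul c a) (mul c b).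
Proof. intros H; rewrite <- (join_of_le a b H), mul_join; apply join_l. Qed.

Lemma mul_mono (a b c d : L) : le a b -> le c d -> le (mul a c) (mul b d).
Proof.
  intros Hab Hcd; apply ml_le_trans with (mul a d); [apply mul_mono_r; exact Hcd|].
  rewrite (ml_mulC L a), (ml_mulC L b); apply mul_mono_r; exact Hab.
Qed.

Lemma mul_le_l (a y : L) : le (mul a y) a.
Proof.
  rewrite <- (ml_mul1 L a) at 2; rewrite (ml_mulC L one).
  apply mul_mono_r, ml_one_top.
Qed.

Lemma mul_le_r (a y : L) : le (mul y a) a.
Proof. rewrite ml_mulC; apply mul_le_l. Qed.

Lemma colon_spec (a b x : L) : le x (ml_colon L a b) <-> le (mul x b) a.
Proof.
  split; intros H.
  - apply ml_le_trans with (mul (ml_colon L a b) b); [apply mul_mono; auto using ml_le_refl|].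
    rewrite ml_mulC; unfold ml_colon; rewrite ml_mul_sup.
    apply ml_sup_least; intros y [z [Hz ->]]; rewrite ml_mulC; exact Hz.
  - apply ml_sup_ub; exact H.
Qed.

(* Elements comaximal with c are closed under products:
   (c v u)(c v v) <= c v uv. *)
Lemma comaximal_mul (c u v : L) :
  le one (join c u) -> le one (join c v) -> le one (join c (mul u v)).
Proof.
  intros Hu Hv. apply ml_le_trans with (mul (join c u) (join c v)).
  { rewrite <- (ml_mul1 L one) at 1; apply mul_mono; auto. }
  rewrite mul_join, (ml_mulC L (join c u) c), (ml_mulC L (join c u) v), !mul_join.
  apply join_least; apply join_least.
  - apply ml_le_trans with c; [apply mul_le_l | apply join_l].
  - apply ml_le_trans with c; [apply mul_le_l | apply join_l].
  - apply ml_le_trans with c; [apply mul_le_r | apply join_l].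
  - rewrite ml_mulC; apply join_r.
Qed.

Lemma comaximal_list_prod (c : L) (l : list L) :
  (forall u, In u l -> le one (join c u)) -> le one (join c (list_prod l)).
Proof.
  induction l as [|u l IH]; intros Hl; simpl.
  - apply join_r.
  - apply comaximal_mul; [apply Hl; left; reflexivity | apply IH; intros; apply Hl; right; auto].
Qed.

Lemma list_prod_le (l : list L) (u : L) : In u l -> le (list_prod l) u.
Proof.
  induction l as [|v l IH]; intros Hu; [destruct Hu|]; simpl.
  destruct Hu as [-> | Hu]; [apply mul_le_l|].
  apply ml_le_trans with (list_prod l); [apply mul_le_r | apply IH; exact Hu].
Qed.

(* If finitely many elements t_i with t_i^2 <= J join with J to 1, then J = 1:
   peel off one t at a time, using 1 <= R v t  ==>  1 <= R v t^2 <= R v J. *)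
Lemma unit_of_squares (J : L) (l : list L) :
  (forall t, In t l -> le (mul t t) J) -> le one (join J (list_sup l)) -> le one J.
Proof.
  induction l as [|t l IH]; intros Hsq Hone.
  - apply ml_le_trans with (join J (list_sup nil)); [exact Hone|].
    apply join_least; [apply ml_le_refl|].
    apply ml_sup_least; intros ? [].
  - set (R := join J (list_sup l)).
    assert (HJR : le J R) by apply join_l.
    assert (HtR : le one (join R t)).
    { apply ml_le_trans with (join J (list_sup (t :: l))); [exact Hone|].
      apply join_least; [apply ml_le_trans with R; [exact HJR | apply join_l]|].
      apply ml_sup_least; intros y [-> | Hy]; [apply join_r|].
      apply ml_le_trans with R; [|apply join_l].
      apply ml_le_trans with (list_sup l); [apply ml_sup_ub; exact Hy | apply join_r]. }
    apply IH; [intros; apply Hsq; right; auto|].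
    apply ml_le_trans with (join R (mul t t)); [apply comaximal_mul; exact HtR|].
    apply join_least; [apply ml_le_refl|].
    apply ml_le_trans with J; [apply Hsq; left; reflexivity | exact HJR].
Qed.

End LatticeFacts.

Section ModuleFacts.
Variable L : MultLattice.
Variable M : LModule L.
Local Notation le := (@ml_le L).
Local Notation mul := (@ml_mul L).
Local Notation one := (@ml_one L).
Local Notation join := (ml_join L).
Local Notation mle := (@lm_le L M).
Local Notation act := (@lm_act L M).
Local Notation T := (lm_top L M).
Local Notation O := (lm_bot L M).
Local Notation colon := (lm_colon L M).

Lemma top_ge (A : M) : mle A T.
Proof. apply lm_sup_ub; exact I. Qed.

Lemma act_mono_l (a b : L) (A : M) : le a b -> mle (act a A) (act b A).
Proof.
  intros H. rewrite <- (join_of_le L a b H). unfold ml_join; rewrite lm_act_supl.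
  apply lm_sup_ub; exists a; split; auto.
Qed.

Lemma act_mono_r (a : L) (A B : M) : mle A B -> mle (act a A) (act a B).
Proof.
  intros H. assert (E : B = lm_sup (fun X => X = A \/ X = B)).
  { apply lm_le_antisym; [apply lm_sup_ub; auto|].
    apply lm_sup_least; intros X [-> | ->]; auto using lm_le_refl. }
  rewrite E, lm_act_supr. apply lm_sup_ub; exists A; split; auto.
Qed.

Lemma act_comm (a b : L) (A : M) : act a (act b A) = act b (act a A).
Proof. rewrite <- !lm_actA, ml_mulC; reflexivity. Qed.

Lemma mcolon_le (N A : M) : mle (act (colon N A) A) N.
Proof.
  unfold lm_colon; rewrite lm_act_supl.
  apply lm_sup_least; intros Y [a [Ha ->]]; exact Ha.
Qed.

Lemma mcolon_spec (N A : M) (x : L) : le x (colon N A) <-> mle (act x A) N.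
Proof.
  split; intros H.
  - apply lm_le_trans with (act (colon N A) A); [apply act_mono_l; exact H | apply mcolon_le].
  - apply ml_sup_ub; exact H.
Qed.

Lemma mult_module_colon :
  multiplication_module L M -> forall N : M, N = act (colon N T) T.
Proof.
  intros Hm N. destruct (Hm N) as [c Ec].
  apply lm_le_antisym; [|apply mcolon_le].
  rewrite Ec at 1. apply act_mono_l, mcolon_spec. rewrite <- Ec; apply lm_le_refl.
Qed.

Lemma principal_cancel (N : M) (x b : L) : lm_principal L M N ->
  mle (act x N) (act b N) -> le x (join b (colon O N)).
Proof.
  intros [_ Hjoin] H. rewrite (Hjoin b O). apply mcolon_spec.
  apply lm_le_trans with (act b N); [exact H | apply lm_sup_ub; left; reflexivity].
Qed.

Lemma annihilator_list_prod (l : list M) :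
  le (list_prod L (map (fun N => colon O N) l)) (colon O (lm_sup (fun N => In N l))).
Proof.
  apply mcolon_spec. rewrite lm_act_supr.
  apply lm_sup_least; intros Y [N [HN ->]].
  apply lm_le_trans with (act (colon O N) N); [|apply mcolon_le].
  apply act_mono_l, list_prod_le, (in_map (fun N => colon O N)); exact HN.
Qed.

Section Cancellation.
Hypothesis faithful : lm_faithful L M.
Hypothesis multiplication : multiplication_module L M.

Variable cover : list M.
Hypothesis cover_principal : forall N, In N cover -> lm_principal L M N.
Hypothesis cover_top : mle T (lm_sup (fun N => In N cover)).

Let traces : list L := map (fun N => colon N T) cover.

Lemma annihilated_is_zero (x : L) : mle (act x T) O -> le x (ml_zero L).
Proof. intros H; rewrite <- faithful; apply mcolon_spec; exact H. Qed.

Lemma traces_unit : le one (list_sup L traces).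
Proof.
  set (th := list_sup L traces).
  assert (Hth : forall N, In N cover -> le (colon N T) th).
  { intros N HN; apply ml_sup_ub, (in_map (fun N => colon N T)); exact HN. }
  assert (HthT : mle T (act th T)).
  { apply lm_le_trans with (1 := cover_top). apply lm_sup_least; intros N HN.
    rewrite (mult_module_colon multiplication N) at 1. apply act_mono_l, Hth, HN. }
  (* N <= (N : I_M) th I_M = th N, so principality gives 1 <= th v (O_M : N) *)
  assert (Hcomax : forall u, In u (map (fun N => colon O N) cover) -> le one (join th u)).
  { intros u Hu; apply in_map_iff in Hu; destruct Hu as [N [<- HN]].
    apply principal_cancel; [apply cover_principal, HN|].
    rewrite lm_act1.
    apply lm_le_trans with (act (colon N T) T); [rewrite <- (mult_module_colon multiplication N); apply lm_le_refl|].
    apply lm_le_trans with (act (colon N T) (act th T)); [apply act_mono_r, HthT|].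
    rewrite act_comm, <- (mult_module_colon multiplication N). apply lm_le_refl. }
  (* by faithfulness the annihilators of the cover multiply to 0 *)
  assert (Hprod0 : le (list_prod L (map (fun N => colon O N) cover)) (ml_zero L)).
  { apply annihilated_is_zero.
    apply lm_le_trans with (1 := act_mono_r _ _ _ cover_top).
    apply mcolon_spec, annihilator_list_prod. }
  apply ml_le_trans with (1 := comaximal_list_prod L th _ Hcomax).
  apply join_least; [apply ml_le_refl|].
  apply ml_le_trans with (1 := Hprod0); apply zero_least.
Qed.

Lemma trace_square (x a : L) : mle (act x T) (act a T) ->
  forall t, In t traces -> le (mul t t) (ml_colon L a x).
Proof.
  intros Hxa t Ht. apply in_map_iff in Ht. destruct Ht as [N [<- HN]].
  set (t := colon N T). set (u := colon O N).
  (* x t N <= x t I_M <= t a I_M = a N, and t u I_M <= u N = O_M *)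
  assert (Hxt : le (mul x t) (join a u)).
  { apply principal_cancel; [apply cover_principal, HN|].
    rewrite lm_actA.
    apply lm_le_trans with (act x (act t T)); [apply act_mono_r, act_mono_r, top_ge|].
    rewrite act_comm. apply lm_le_trans with (act t (act a T)); [apply act_mono_r, Hxa|].
    rewrite act_comm; unfold t; rewrite <- (mult_module_colon multiplication N).
    apply lm_le_refl. }
  assert (Htu : le (mul t u) (ml_zero L)).
  { apply annihilated_is_zero. rewrite ml_mulC, lm_actA.
    apply lm_le_trans with (act u N); [apply act_mono_r, mcolon_le | apply mcolon_le]. }
  apply colon_spec.
  rewrite <- ml_mulA, (ml_mulC L t x).
  apply ml_le_trans with (mul t (join a u)); [apply mul_mono_r, Hxt|].
  rewrite mul_join. apply join_least; [apply mul_le_r|].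
  apply ml_le_trans with (1 := Htu); apply zero_least.
Qed.

Lemma cancel_on_cover (x a : L) : mle (act x T) (act a T) -> le x a.
Proof.
  intros Hxa.
  assert (Hunit : le one (ml_colon L a x)).
  { apply (unit_of_squares L _ traces (trace_square x a Hxa)).
    apply ml_le_trans with (1 := traces_unit), join_r. }
  apply colon_spec in Hunit. rewrite ml_mul1 in Hunit. exact Hunit.
Qed.

End Cancellation.

Lemma cancellation :
  lm_faithful L M -> multiplication_module L M -> PG_module L M ->
  lm_compact L M T -> forall x a : L, mle (act x T) (act a T) -> le x a.
Proof.
  intros Hf Hm Hpg Hc. destruct (Hpg T) as [S [HS HT]].
  destruct (Hc S) as [cover [Hcover HTcover]]; [rewrite <- HT; apply lm_le_refl|].
  apply (cancel_on_cover Hf Hm cover); [intros N HN; apply HS, Hcover, HN | exact HTcover].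
Qed.

Lemma module_primary_colon (d : L -> L) (N : M) :
  lm_delta_primary L M d N -> delta_primary L d (colon N T).
Proof.
  intros [[HNle HNne] HN]. split.
  - split; [apply ml_one_top|]. intros E. apply HNne, lm_le_antisym; [exact HNle|].
    rewrite <- (lm_act1 L M T), <- E. apply mcolon_le.
  - intros a b Hab.
    assert (H : mle (act b (act a T)) N).
    { rewrite <- lm_actA, ml_mulC. apply mcolon_spec, Hab. }
    destruct (HN _ _ H) as [H1 | H1]; [left; apply mcolon_spec, H1 | right; exact H1].
Qed.

Lemma colon_primary_module (d : L -> L) (N : M) :
  multiplication_module L M -> lm_lt L M N T ->
  delta_primary L d (colon N T) -> lm_delta_primary L M d N.
Proof.
  intros Hm HNT [_ HP]. split; [exact HNT|].
  intros A a HaA. rewrite (mult_module_colon Hm A) in HaA |- *.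
  rewrite <- lm_actA in HaA. apply mcolon_spec in HaA. rewrite ml_mulC in HaA.
  destruct (HP _ a HaA) as [H | H]; [left | right; exact H].
  apply lm_le_trans with (act (colon N T) T); [apply act_mono_l, H | apply mcolon_le].
Qed.

End ModuleFacts.

Theorem theorem4p14 (L : MultLattice) (M : LModule L) (N : M) (d : L -> L) :
  ml_standing L ->
  PG_lattice L ->
  lm_faithful L M ->
  multiplication_module L M ->
  PG_module L M ->
  lm_compact L M (lm_top L M) ->
  lm_lt L M N (lm_top L M) ->
  expansion L d ->
  (lm_delta_primary L M d N <-> delta_primary L d (lm_colon L M N (lm_top L M))) /\
  (delta_primary L d (lm_colon L M N (lm_top L M)) <->
     exists q : L, delta_primary L d q /\ N = lm_act q (lm_top L M)).
Proof.
  intros _ _ Hf Hm Hpg Hc HNT _. split; split.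
  - apply module_primary_colon.
  - apply colon_primary_module; assumption.
  - intros HP. exists (lm_colon L M N (lm_top L M)).
    split; [exact HP | apply mult_module_colon, Hm].
  - intros [q [Hq Eq]].
    (* the residual of N = q I_M is q itself, by cancellation *)
    replace (lm_colon L M N (lm_top L M)) with q; [exact Hq|].
    apply ml_le_antisym.
    + apply mcolon_spec. rewrite Eq; apply lm_le_refl.
    + apply (cancellation L M Hf Hm Hpg Hc). rewrite <- Eq; apply mcolon_le.
Qed.
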